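(* Let $X$ be a real Banach space, $K\subset X$ compact, $\lambda_1,\dots,\lambda_m\in X^*$ with $\|\lambda_j\|_{X^*}=1$, and $w\in\mathbb{R}^m$. Let $\varepsilon>0$ and let $g_\varepsilon\in X$ satisfy $$\|\lambda(g_\varepsilon)-w\|\le\varepsilon\quad\text{and}\quad \operatorname{dist}(g_\varepsilon,K)_X\le\varepsilon .$$ Then $$\|f-g_\varepsilon\|_X\le \varepsilon+2R(K(w,2\varepsilon))_X\qquad\text{for all } f\in K_w .$$ Moreover, if $R(K_w)_X\neq 0$, then for every $C>2$ there is $\varepsilon_0>0$ such that whenever $0<\varepsilon\le\varepsilon_0$ and $g_\varepsilon$ satisfies the two conditions above, $\|f-g_\varepsilon\|_X\le C\,R(K_w)_X$ for all $f\in K_w$.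
   Context: For $g\in X$, $\lambda(g):=(\lambda_1(g),\dots,\lambda_m(g))\in\mathbb{R}^m$; on $\mathbb{R}^m$ use $\|v\|:=\big[\frac1m\sum_{j=1}^m|v_j|^2\big]^{1/2}$. $\operatorname{dist}(g,K)_X:=\inf_{h\in K}\|g-h\|_X$. $K_w:=\{f\in K:\lambda(f)=w\}$ and $K(w,\varepsilon):=\bigcup_{\|w'-w\|\le\varepsilon}K_{w'}$ ($w'\in\mathbb{R}^m$). For $S\subset X$, $R(S)_X:=\inf\{r:\ S\subset B(z,r)_X\text{ for some }z\in X\}$ is the Chebyshev radius, $B(z,r)_X$ the ball of center $z$ and radius $r$. *)

From HB Require Import structures.
From mathcomp Require Import all_boot all_order all_algebra.
From mathcomp Require Import all_classical all_reals all_analysis.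
Set Implicit Arguments. Unset Strict Implicit. Unset Printing Implicit Defensive.
Import Order.TTheory GRing.Theory Num.Theory.
Import numFieldNormedType.Exports.
Local Open Scope classical_set_scope.
Local Open Scope ring_scope.

Definition is_linear_functional (R : realType) (X : normedModType R)
  (l : X -> R) : Prop :=
  forall (a : R) (x y : X), l (a *: x + y) = a * l x + l y.

Definition dual_norm (R : realType) (X : normedModType R) (l : X -> R) : R :=
  sup [set `|l x| | x in [set x : X | `|x| <= 1]].

Definition vnorm (R : realType) (m : nat) (v : 'I_m -> R) : R :=
  Num.sqrt ((m%:R)^-1 * \sum_(j < m) `|v j| ^+ 2).

Definition lamvec (R : realType) (X : normedModType R) (m : nat)
  (lam : 'I_m -> X -> R) (g : X) : 'I_m -> R := fun j => lam j g.

Definition distX (R : realType) (X : normedModType R) (g : X) (K : set X) : R :=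
  inf [set `|g - h| | h in K].

Definition Kfib (R : realType) (X : normedModType R) (m : nat)
  (lam : 'I_m -> X -> R) (K : set X) (w : 'I_m -> R) : set X :=
  [set f | K f /\ lamvec lam f = w].

Definition Knbhd (R : realType) (X : normedModType R) (m : nat)
  (lam : 'I_m -> X -> R) (K : set X) (w : 'I_m -> R) (eps : R) : set X :=
  [set f | exists w' : 'I_m -> R,
     vnorm (fun j => w' j - w j) <= eps /\ Kfib lam K w' f].

Definition cheb_radius (R : realType) (X : normedModType R) (S : set X) : R :=
  inf [set r : R | 0 <= r /\ exists z : X, forall x, S x -> `|x - z| <= r].

(* Let h be a point of K nearest to g, so ||g - h|| <= eps.  Each lambda_j is
   1-Lipschitz, hence ||lambda(h) - w|| <= 2 eps and both f and h lie in
   K(w, 2 eps), whose diameter is at most twice its Chebyshev radius.  For the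
   second claim, the data misfit ||lambda(.) - w|| is continuous and vanishes on
   K exactly at K_w, so by compactness points of K with small misfit are
   uniformly close to K_w; for small eps, h is within (C - 2) R(K_w) / 2 of a
   point of K_w, which is within 2 R(K_w) of f. *)

From HB Require Import structures.
From mathcomp Require Import all_boot all_order all_algebra.
From mathcomp Require Import all_classical all_reals all_analysis.
From mathcomp Require Import ring lra.
Import Order.TTheory GRing.Theory Num.Theory.
Import numFieldNormedType.Exports.
Local Open Scope classical_set_scope.
Local Open Scope ring_scope.

Section linear_functional.
Context {R : realType} {X : normedModType R} {l : X -> R}.
Hypothesis linl : is_linear_functional l.

Lemma linear_functional0 : l 0 = 0.
Proof.
have := linl 1 0 0; rewrite scale1r addr0 mul1r => /eqP.
by rewrite addrC -subr_eq subrr => /eqP.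
Qed.

Lemma linear_functionalZ a x : l (a *: x) = a * l x.
Proof. by rewrite -[a *: x]addr0 linl linear_functional0 addr0. Qed.

Lemma linear_functionalB x y : l (x - y) = l x - l y.
Proof. by rewrite addrC -scaleN1r linl mulN1r addrC. Qed.

Lemma linear_functional_le_dual_norm x :
  0 < dual_norm l -> `|l x| <= dual_norm l * `|x|.
Proof.
rewrite /dual_norm; set E := [set `|l y| | y in _] => supE_gt0.
have supE : has_sup E.
  by apply/not_notP => /sup_out supE0; rewrite supE0 ltxx in supE_gt0.
have [->|x_neq0] := eqVneq x 0; first by rewrite linear_functional0 !normr0 mulr0.
have x_gt0 : 0 < `|x| by rewrite normr_gt0.
rewrite -ler_pdivrMr // mulrC; apply: sup_upper_bound => //.
exists (`|x|^-1 *: x); last by rewrite linear_functionalZ normrM ger0_norm.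
by rewrite /= normrZ ger0_norm ?mulVf ?gt_eqF.
Qed.

Lemma dual_norm1_lipschitz x y : dual_norm l = 1 -> `|l x - l y| <= `|x - y|.
Proof.
move=> l1; rewrite -linear_functionalB -[leRHS]mul1r -l1.
by apply: linear_functional_le_dual_norm; rewrite l1.
Qed.
End linear_functional.

Section vnorm.
Context {R : realType} {m : nat}.
Implicit Types (v a b : 'I_m -> R) (e : R).

Lemma vnorm_ge0 v : 0 <= vnorm v.
Proof. exact: sqrtr_ge0. Qed.

Lemma sqr_vnorm v : vnorm v ^+ 2 = m%:R^-1 * \sum_(j < m) `|v j| ^+ 2.
Proof. by rewrite sqr_sqrtr // mulr_ge0 ?invr_ge0 ?ler0n ?sumr_ge0. Qed.

Lemma vnorm_le_sqr e v : 0 <= e -> (vnorm v <= e) = (vnorm v ^+ 2 <= e ^+ 2).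
Proof. by move=> e_ge0; rewrite ler_pXn2r ?nnegrE ?vnorm_ge0. Qed.

Lemma vnorm0 : vnorm (fun _ : 'I_m => 0 : R) = 0.
Proof.
by rewrite /vnorm big1 ?mulr0 ?sqrtr0 // => j _; rewrite normr0 expr0n.
Qed.

Lemma vnorm_eq0 v : vnorm v = 0 -> v = fun=> 0.
Proof.
case: m v => [|n] v; first by move=> _; apply/funext => -[].
move/eqP; rewrite sqrtr_eq0 pmulr_rle0 ?invr_gt0 ?ltr0n // => sum_le0.
have sum_eq0 : \sum_(j < n.+1) `|v j| ^+ 2 = 0.
  by apply/eqP; rewrite eq_le sum_le0 sumr_ge0.
apply/funext => j; apply/eqP; rewrite -normr_eq0 -sqrf_eq0.
by apply/eqP; apply: (psumr_eq0P _ sum_eq0).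
Qed.

Lemma vnorm_le_max a e : 0 <= e -> (forall j, `|a j| <= e) -> vnorm a <= e.
Proof.
move=> e_ge0 a_le; rewrite vnorm_le_sqr // sqr_vnorm.
have sum_le : \sum_(j < m) `|a j| ^+ 2 <= m%:R * e ^+ 2.
  rewrite mulr_natl -[in leRHS](card_ord m) -sumr_const ler_sum // => j _.
  by rewrite lerXn2r ?nnegrE.
case: m a a_le sum_le => [|n] a _ sum_le; first by rewrite invr0 mul0r exprn_ge0.
by rewrite ler_pdivrMl ?ltr0n.
Qed.

Lemma vnorm_add_sqr a b :
  vnorm (a \+ b) ^+ 2 <= 2 * (vnorm a ^+ 2 + vnorm b ^+ 2).
Proof.
rewrite !sqr_vnorm -mulrDr mulrCA ler_wpM2l ?invr_ge0 //.
rewrite -big_split mulr_sumr ler_sum // => j _ /=.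
have := ler_normD (a j) (b j); have := normr_ge0 (a j + b j).
have := normr_ge0 (a j); have := normr_ge0 (b j).
set x := `|a j|; set y := `|b j|; set z := `|a j + b j|.
have := sqr_ge0 (x - y); rewrite !expr2; nra.
Qed.

Lemma vnorm_add_le a b e :
  vnorm a <= e -> vnorm b <= e -> vnorm (a \+ b) <= 2 * e.
Proof.
move=> a_le b_le; have e_ge0 := le_trans (vnorm_ge0 a) a_le.
rewrite vnorm_le_sqr ?mulr_ge0 //; apply: le_trans (vnorm_add_sqr a b) _.
have := vnorm_ge0 a; have := vnorm_ge0 b; rewrite !expr2; nra.
Qed.
End vnorm.

Lemma continuous_vnorm (R : realType) (T : topologicalType) (m : nat)
    (v : T -> 'I_m -> R) :
  (forall j, continuous (fun x => v x j)) -> continuous (fun x => vnorm (v x)).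
Proof.
move=> v_cont; rewrite /vnorm.
have sum_cont : continuous (fun x => \sum_(j < m) `|v x j| ^+ 2).
  apply: continuous_big; first exact: add_continuous.
  by move=> j _ x; apply: cvgM; apply: cvg_norm; apply: v_cont.
move=> x; apply: continuous_comp; last exact: sqrt_continuous.
by apply: cvgM; [exact: cvg_cst | exact: sum_cont].
Qed.

Section normed_space.
Context {R : realType} {X : normedModType R}.
Implicit Types (S K : set X).

Lemma bounded_setS S K : S `<=` K -> bounded_set K -> bounded_set S.
Proof. by move=> SK; apply: sub_boundedr => P KP x /SK; apply: KP. Qed.

Lemma cheb_radius_ge0 S : 0 <= cheb_radius S.
Proof.
rewrite /cheb_radius; set E := [set r | _].
have [->|/set0P E_neq0] := eqVneq E set0; first by rewrite inf0.
by apply: lb_le_inf => // r [].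
Qed.

Lemma cheb_radius_diam {S x y} : bounded_set S -> S x -> S y ->
  `|x - y| <= 2 * cheb_radius S.
Proof.
move=> /ex_strict_bound_gt0 [M M_gt0 SM] Sx Sy.
rewrite -ler_pdivrMl // mulrC; apply: lb_le_inf.
  by exists M; split; [exact: ltW | exists 0 => z /SM; rewrite subr0 => /ltW].
move=> r [_ [z Sz]]; rewrite ler_pdivrMr // mulr_natr mulr2n.
rewrite -(subrKA z) addrC; apply: le_trans (ler_normD _ _) _.
by rewrite distrC lerD ?Sz.
Qed.

Lemma distX_attained K g : compact K -> K !=set0 ->
  exists2 h, K h & `|g - h| <= distX g K.
Proof.
move=> K_compact K_neq0.
have dist_cont : continuous (fun h : X => `|g - h|).
  by move=> x; apply: cvg_norm; apply: cvgB; [exact: cvg_cst | exact: cvg_id].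
have [h Kh h_min] :=
  compact_EVT_min K_neq0 K_compact (continuous_subspaceT dist_cont).
move: Kh; rewrite inE => Kh; exists h => //.
have [f Kf] := K_neq0; apply: lb_le_inf; first by exists `|g - f|, f.
by move=> _ [k Kk <-]; apply: h_min; rewrite inE.
Qed.

Lemma compact_near_zeros {K} {phi : X -> R} {d} :
  compact K -> continuous phi -> 0 < d ->
  exists2 eta, 0 < eta & forall h, K h -> `|phi h| < eta ->
    exists2 z, K z /\ phi z = 0 & `|h - z| < d.
Proof.
move=> K_compact phi_cont d_gt0.
pose N := \bigcup_(z in [set z | K z /\ phi z = 0]) ball z d.
have near_zero h : K h -> N h -> exists2 z, K z /\ phi z = 0 & `|h - z| < d.
  by move=> _ [z Zz]; rewrite -ball_normE /ball_ /= distrC; exists z.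
pose A := K `&` ~` N.
have [A0|/set0P A_neq0] := eqVneq A set0.
  exists 1 => // h Kh _; apply: near_zero => //; apply: contrapT => Nh.
  by have : A h by []; rewrite A0.
have A_compact : compact A.
  apply: (subclosed_compact _ K_compact); last exact: subIsetl.
  apply: closedI; first exact: compact_closed (@norm_hausdorff _ X) K_compact.
  by apply: open_closedC; apply: bigcup_open => z _; exact: ball_open.
have absphi_cont : continuous (fun x => `|phi x|).
  by move=> x; apply: cvg_norm; exact: phi_cont.
have [c Ac c_min] :=
  compact_EVT_min A_neq0 A_compact (continuous_subspaceT absphi_cont).
move: Ac; rewrite inE => -[Kc not_Nc].
exists `|phi c|.
  rewrite normr_gt0; apply/eqP => phic0; apply: not_Nc.
  by exists c => //; exact: ballxx.
move=> h Kh phih_lt; apply: near_zero => //; apply: contrapT => not_Nh.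
by have := c_min h; rewrite inE leNgt phih_lt => /(_ (conj Kh not_Nh)).
Qed.
End normed_space.

Section measurement_data.
Context {R : realType} {X : normedModType R} {m : nat}.
Context {lam : 'I_m -> X -> R} {w : 'I_m -> R} {K : set X}.
Hypothesis lam_lin : forall j, is_linear_functional (lam j).
Hypothesis lam_norm1 : forall j, dual_norm (lam j) = 1.
Hypothesis K_compact : compact K.

Lemma vnorm_lamvec_triangle {g h e} :
  vnorm (fun j => lamvec lam g j - w j) <= e -> `|g - h| <= e ->
  vnorm (fun j => lamvec lam h j - w j) <= 2 * e.
Proof.
move=> gw gh.
have -> : (fun j => lamvec lam h j - w j) =
    (fun j => lam j h - lam j g) \+ (fun j => lamvec lam g j - w j).
  by apply/funext => j /=; rewrite /lamvec subrKA.
apply: vnorm_add_le gw; apply: vnorm_le_max => [|j].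
  exact: le_trans (normr_ge0 _) gh.
rewrite distrC; apply: le_trans gh.
exact: dual_norm1_lipschitz (lam_lin j) g h (lam_norm1 j).
Qed.

Lemma near_point_of_distX {g f eps} : distX g K <= eps -> K f ->
  exists2 h, K h & `|g - h| <= eps.
Proof.
move=> gK Kf; have [h Kh gh] := distX_attained K g K_compact (ex_intro _ f Kf).
by exists h => //; apply: le_trans gK.
Qed.

Lemma dist_Kfib_le_cheb_radius_Knbhd eps g : 0 < eps ->
  vnorm (fun j => lamvec lam g j - w j) <= eps -> distX g K <= eps ->
  forall f, Kfib lam K w f ->
  `|f - g| <= eps + 2 * cheb_radius (Knbhd lam K w (2 * eps)).
Proof.
move=> eps_gt0 gw gK f Kwf.
have [h Kh gh] := near_point_of_distX gK (proj1 Kwf).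
have fN : Knbhd lam K w (2 * eps) f.
  exists w; split => //; rewrite (_ : (fun j => w j - w j) = fun=> 0).
    by rewrite vnorm0 mulr_ge0 // ltW.
  by apply/funext => j; rewrite subrr.
have hN : Knbhd lam K w (2 * eps) h.
  by exists (lamvec lam h); split; first exact: (vnorm_lamvec_triangle gw gh).
have N_bounded : bounded_set (Knbhd lam K w (2 * eps)).
  by apply: bounded_setS (compact_bounded K_compact) => x [w' [_ []]].
have := cheb_radius_diam N_bounded fN hN.
have := ler_distD h f g; rewrite distrC in gh; lra.
Qed.

Hypothesis lam_cont : forall j, continuous (lam j).

Lemma eventually_dist_Kfib_le_cheb_radius :
  cheb_radius (Kfib lam K w) != 0 -> forall C, 2 < C ->
  exists2 eps0, 0 < eps0 &
    forall eps g, 0 < eps -> eps <= eps0 ->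
      vnorm (fun j => lamvec lam g j - w j) <= eps -> distX g K <= eps ->
      forall f, Kfib lam K w f -> `|f - g| <= C * cheb_radius (Kfib lam K w).
Proof.
set rho := cheb_radius _ => rho_neq0 C C_gt2.
have rho_gt0 : 0 < rho by rewrite lt_def rho_neq0 cheb_radius_ge0.
pose d := (C - 2) * rho / 2.
have d_gt0 : 0 < d by rewrite divr_gt0 // mulr_gt0 // subr_gt0.
have misfit_cont : continuous (fun x => vnorm (fun j => lamvec lam x j - w j)).
  apply: continuous_vnorm => j x.
  by apply: cvgB; [exact: lam_cont | exact: cvg_cst].
have [eta eta_gt0 eta_near] := compact_near_zeros K_compact misfit_cont d_gt0.
exists (Num.min d (eta / 4)); first by rewrite lt_min d_gt0 divr_gt0.
move=> eps g eps_gt0; rewrite le_min => /andP[eps_d eps_eta] gw gK f Kwf.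
have [h Kh gh] := near_point_of_distX gK (proj1 Kwf).
have h_misfit : `|vnorm (fun j => lamvec lam h j - w j)| < eta.
  rewrite ger0_norm ?vnorm_ge0 //.
  by apply: le_lt_trans (vnorm_lamvec_triangle gw gh) _; lra.
have [h' [Kh' /vnorm_eq0 h'w] hh'] := eta_near h Kh h_misfit.
have Kwh' : Kfib lam K w h'.
  split=> //; apply/funext => j; apply/eqP.
  by rewrite -subr_eq0 (congr1 (@^~ j) h'w).
have Kw_bounded : bounded_set (Kfib lam K w).
  by apply: bounded_setS (compact_bounded K_compact) => x [].
have := cheb_radius_diam Kw_bounded Kwf Kwh'.
(* |f - g| <= |f - h'| + |h' - h| + |h - g| <= 2 rho + d + eps <= 2 rho + 2 d *)
have dE : 2 * d = C * rho - 2 * rho by rewrite /d; field.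
have := ler_distD h' f g; have := ler_distD h h' g.
rewrite distrC in gh; rewrite distrC in hh'; lra.
Qed.
End measurement_data.

Theorem theorem2p3 (R : realType) (X : completeNormedModType R)
  (K : set X) (m : nat) (lam : 'I_m -> X -> R) (w : 'I_m -> R) :
  compact K ->
  (forall j, is_linear_functional (lam j)) ->
  (forall j, continuous (lam j)) ->
  (forall j, dual_norm (lam j) = 1) ->
  (forall (eps : R) (g : X), 0 < eps ->
     vnorm (fun j => lamvec lam g j - w j) <= eps ->
     distX g K <= eps ->
     forall f, Kfib lam K w f ->
       `|f - g| <= eps + 2 * cheb_radius (Knbhd lam K w (2 * eps)))
  /\
  (cheb_radius (Kfib lam K w) != 0 ->
   forall C : R, 2 < C ->
   exists2 eps0 : R, 0 < eps0 &
     forall (eps : R) (g : X), 0 < eps -> eps <= eps0 ->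
       vnorm (fun j => lamvec lam g j - w j) <= eps ->
       distX g K <= eps ->
       forall f, Kfib lam K w f ->
         `|f - g| <= C * cheb_radius (Kfib lam K w)).
Proof.
move=> K_compact lam_lin lam_cont lam_norm1; split.
- exact: (dist_Kfib_le_cheb_radius_Knbhd lam_lin lam_norm1 K_compact).
- exact: (eventually_dist_Kfib_le_cheb_radius
           lam_lin lam_norm1 K_compact lam_cont).
Qed.
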